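(* Let $N_w,N_d,L\ge 1$ be integers, $\sigma_i^2>0$, $N_0>0$, and let $\tilde A_{k,j}>0$ for $k\in[N_w]$, $j\in[N_d]$. Let the location $X$ be uniformly distributed a priori on $[L]$, and let the captured image $\mathbf{Y}=(Y_{k,j})$ and the global map sections $\mathbf{Y}^l=(Y^l_{k,j})$, $l\in[L]$, follow the Gaussian tile model described in the context. Then the maximum likelihood location estimate (the $\ell\in[L]$ maximizing $\Pr(X=\ell\mid \mathbf{Y}=\mathbf{y},\ \mathbf{Y}^l=\mathbf{y}^l,\ l\in[L])$) is $$\hat{\ell}=\operatorname*{arg\,min}_{\ell\in[L]}\ \sum_{k=1}^{N_w}\sum_{j=1}^{N_d}\frac{(y^\ell_{k,j}-y_{k,j})^2}{2\sigma_i^2+N_0/\tilde A_{k,j}}.$$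
   Context: Setting (vision-based vehicle localization by matching a captured road image to one of $L$ sections of a global map). Each image is a matrix of $N_w\times N_d$ tiles. The captured image is $\mathbf{Y}=\mathbf{A}+\mathbf{N}^i+\mathbf{N}^s$, i.e. $Y_{k,j}=a_{k,j}+n^i_{k,j}+n^s_{k,j}$, where $a_{k,j}$ is the underlying road signal, $n^i_{k,j}$ is intrinsic (environmental) noise, zero-mean Gaussian with variance $\sigma_i^2$, and $n^s_{k,j}$ is sensor noise, zero-mean Gaussian with variance $(\sigma^s_{k,j})^2=N_0/\tilde A_{k,j}$; here $\tilde A_{k,j}$ is the area of the projection of tile $(k,j)$ of the road onto the focal plane of the camera (for square road tiles of side $s$, camera height $h$, depression angle $\theta$, focal length $f$: $\tilde A_{k,j}=\frac{s}{2\cos\theta}\big[\frac{f^2h}{((j-1)s\cos\theta+h\sin\theta)^2}-\frac{f^2h}{(js\cos\theta+h\sin\theta)^2}\big]$). The $\ell$-th map section is $\mathbf{Y}^\ell=\mathbf{A}^\ell+\mathbf{N}^{i,\ell}$ with $n^{i,\ell}_{k,j}$ zero-mean Gaussian of variance $\sigma_i^2$; if the true location is $\ell$ then $\mathbf{A}=\mathbf{A}^\ell$. All noise terms are independent across tiles and of one another. Conditional on $X=\ell$, the captured image depends on the map only through $\mathbf{Y}^\ell$, and given $Y^\ell_{k,j}=y^\ell_{k,j}$ the underlying signal is modeled as $a^\ell_{k,j}\sim\mathcal N(y^\ell_{k,j},\sigma_i^2)$, independently across tiles. *)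

From HB Require Import structures.
From mathcomp Require Import all_boot all_order all_algebra.
From mathcomp Require Import all_classical all_reals all_analysis.
Set Implicit Arguments. Unset Strict Implicit. Unset Printing Implicit Defensive.
Import Order.TTheory GRing.Theory Num.Theory.
Local Open Scope ring_scope.

Section Model.
Context {R : realType}.

(* Gaussian density with mean [m] and VARIANCE [v] (library's normal_pdf uses
   the standard deviation). *)
Definition gauss (m v x : R) : R := normal_pdf m (Num.sqrt v) x.

(* Density at [y] of one captured tile  Y = a + n^i + n^s  given X = l and the
   map tile y^l = m, where a ~ N(m, vi) (the model a | Y^l = m),
   n^i ~ N(0, vi), n^s ~ N(0, vs), all independent: the convolution of the
   three Gaussian densities. *)
Definition tile_density (m vi vs y : R) : R :=
  fine (\int[lebesgue_measure]_a \int[lebesgue_measure]_n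
          ((gauss m vi a * gauss 0 vi n * gauss 0 vs (y - a - n))%:E))%E.

Definition likelihood (Nw Nd L : nat) (sig2 N0 : R) (Atil : 'M[R]_(Nw, Nd))
    (y : 'M[R]_(Nw, Nd)) (ymap : 'I_L -> 'M[R]_(Nw, Nd)) (l : 'I_L) : R :=
  \prod_(k < Nw) \prod_(j < Nd)
     tile_density (ymap l k j) sig2 (N0 / Atil k j) (y k j).

Definition prior (L : nat) (l : 'I_L) : R := L%:R^-1.

(* Posterior Pr(X = l | Y = y, Y^l' = y^l', l' in [L]) by Bayes' rule; the
   map sections are independent of X, so their density cancels. *)
Definition posterior (Nw Nd L : nat) (sig2 N0 : R) (Atil : 'M[R]_(Nw, Nd))
    (y : 'M[R]_(Nw, Nd)) (ymap : 'I_L -> 'M[R]_(Nw, Nd)) (l : 'I_L) : R :=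
  prior l * likelihood sig2 N0 Atil y ymap l /
  \sum_(l' < L) prior l' * likelihood sig2 N0 Atil y ymap l'.

Definition match_cost (Nw Nd L : nat) (sig2 N0 : R) (Atil : 'M[R]_(Nw, Nd))
    (y : 'M[R]_(Nw, Nd)) (ymap : 'I_L -> 'M[R]_(Nw, Nd)) (l : 'I_L) : R :=
  \sum_(k < Nw) \sum_(j < Nd)
     (ymap l k j - y k j) ^+ 2 / (2 * sig2 + N0 / Atil k j).

End Model.

From HB Require Import structures.
From mathcomp Require Import all_boot all_order all_algebra.
From mathcomp Require Import all_classical all_reals all_analysis.
From mathcomp Require Import ring measurable_realfun.
Import Order.TTheory GRing.Theory Num.Theory.
Local Open Scope ring_scope.

(** The captured tile is the map tile plus three independent centred
    Gaussians (the uncertainty of the road signal given the map, the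
    intrinsic noise and the sensor noise), so its density is Gaussian with
    variance [2 sig2 + N0 / Atil k j]: convolving Gaussian densities adds
    their variances, because their product factors, after completing the
    square, into a Gaussian in the output times a probability density in the
    integration variable. Hence the likelihood of a location is a positive
    constant, independent of the location, times [exp (- cost / 2)]; with a
    uniform prior the posterior is a positive multiple of the likelihood, so
    maximizing the posterior is minimizing the cost. *)

Lemma sqrt_variance_product (F : fieldType) (v1 v2 c : F) : v1 + v2 != 0 ->
  v1 * c * (v2 * c) = (v1 + v2) * c * (v1 * v2 / (v1 + v2) * c).
Proof. by move=> v12; field. Qed.

Lemma complete_square (F : realFieldType) (m v1 v2 z x : F) :
  0 < v1 -> 0 < v2 ->
  - (x - m) ^+ 2 / (v1 *+ 2) + - (z - x) ^+ 2 / (v2 *+ 2) =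
  - (z - m) ^+ 2 / ((v1 + v2) *+ 2) +
  - (x - (m * v2 + z * v1) / (v1 + v2)) ^+ 2 / (v1 * v2 / (v1 + v2) *+ 2).
Proof.
move=> v1_gt0 v2_gt0; rewrite !mulr2n; field.
by rewrite !gt_eqF ?addr_gt0 ?mulr_gt0.
Qed.

Section GaussianConvolution.
Variable R : realType.

Lemma gaussE (m v x : R) : 0 < v ->
  gauss m v x = (Num.sqrt (v * pi *+ 2))^-1 * expR (- (x - m) ^+ 2 / (v *+ 2)).
Proof.
move=> v_gt0; rewrite /gauss normal_pdfE; last by rewrite gt_eqF ?sqrtr_gt0.
by rewrite /normal_peak /normal_fun sqr_sqrtr ?ltW.
Qed.

Lemma gauss_ge0 (m v x : R) : 0 <= gauss m v x.
Proof. exact: normal_pdf_ge0. Qed.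

Lemma measurable_gauss (m v : R) : measurable_fun setT (gauss m v).
Proof. exact: measurable_normal_pdf. Qed.

Lemma integral_gauss (m v : R) :
  (\int[lebesgue_measure]_x (gauss m v x)%:E = 1)%E.
Proof. exact: integral_normal_pdf. Qed.

Lemma gauss_mul_shift (m v1 v2 z x : R) : 0 < v1 -> 0 < v2 ->
  gauss m v1 x * gauss 0 v2 (z - x) =
  gauss m (v1 + v2) z *
  gauss ((m * v2 + z * v1) / (v1 + v2)) (v1 * v2 / (v1 + v2)) x.
Proof.
move=> v1_gt0 v2_gt0.
have v12_gt0 : 0 < v1 + v2 by rewrite addr_gt0.
have pi_gt0 : 0 < pi :> R := pi_gt0 R.
rewrite !gaussE ?divr_gt0 ?mulr_gt0 // subr0.
rewrite mulrACA [RHS]mulrACA -!expRD -!invfM.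
rewrite -!sqrtrM ?mulrn_wge0 ?mulr_ge0 ?ltW //.
congr (_ ^-1 * expR _); last exact: complete_square.
by rewrite -!mulrnAr sqrt_variance_product ?gt_eqF.
Qed.

Lemma integral_gauss_conv (m v1 v2 z : R) : 0 < v1 -> 0 < v2 ->
  (\int[lebesgue_measure]_x (gauss m v1 x * gauss 0 v2 (z - x))%:E =
   (gauss m (v1 + v2) z)%:E)%E.
Proof.
move=> v1_gt0 v2_gt0.
under eq_integral => x _ do rewrite gauss_mul_shift // EFinM.
rewrite ge0_integralZl ?integral_gauss ?mule1 ?lee_fin ?gauss_ge0 //.
- by apply/measurable_EFinP; exact: measurable_gauss.
- by move=> x _; rewrite lee_fin gauss_ge0.
Qed.

Lemma tile_densityE (m vi vs y : R) : 0 < vi -> 0 < vs ->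
  tile_density m vi vs y = gauss m (2 * vi + vs) y.
Proof.
move=> vi_gt0 vs_gt0; rewrite /tile_density.
have noise_sum a : (\int[lebesgue_measure]_n
    ((gauss m vi a * gauss 0 vi n * gauss 0 vs (y - a - n))%:E) =
    (gauss m vi a)%:E * (gauss 0 (vi + vs) (y - a))%:E)%E.
  under eq_integral => n _ do rewrite -mulrA EFinM.
  rewrite ge0_integralZl ?integral_gauss_conv ?lee_fin ?gauss_ge0 //.
  - apply/measurable_EFinP/measurable_funM; first exact: measurable_gauss.
    apply: (measurable_comp (F := setT)) => //; first exact: measurable_gauss.
    exact: measurable_funB.
  - by move=> n _; rewrite lee_fin mulr_ge0 ?gauss_ge0.
under eq_integral => a _ do rewrite noise_sum -EFinM.
by rewrite integral_gauss_conv ?addr_gt0 //= addrA -mulr2n mulr_natl.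
Qed.

End GaussianConvolution.

Section MaximumLikelihood.
Variables (R : realType) (Nw Nd L : nat) (sig2 N0 : R).
Variables (Atil y : 'M[R]_(Nw, Nd)) (ymap : 'I_L -> 'M[R]_(Nw, Nd)).
Hypotheses (sig2_gt0 : 0 < sig2) (N0_gt0 : 0 < N0).
Hypothesis Atil_gt0 : forall k j, 0 < Atil k j.

Let tile_var_gt0 k j : 0 < 2 * sig2 + N0 / Atil k j.
Proof. by rewrite addr_gt0 ?divr_gt0 ?mulr_gt0 ?ltr0n. Qed.

Definition likelihood_scale : R :=
  \prod_(k < Nw) \prod_(j < Nd)
     (Num.sqrt ((2 * sig2 + N0 / Atil k j) * pi *+ 2))^-1.

Lemma likelihood_scale_gt0 : 0 < likelihood_scale.
Proof.
apply: prodr_gt0 => k _; apply: prodr_gt0 => j _.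
by rewrite invr_gt0 sqrtr_gt0 pmulrn_lgt0 // mulr_gt0 ?pi_gt0 ?tile_var_gt0.
Qed.

Lemma likelihoodE l :
  likelihood sig2 N0 Atil y ymap l =
  likelihood_scale * expR (- (match_cost sig2 N0 Atil y ymap l / 2)).
Proof.
rewrite /likelihood /match_cost /likelihood_scale big_distrl -sumrN expR_sum.
rewrite -big_split; apply: eq_bigr => k _ /=.
rewrite big_distrl -sumrN expR_sum -big_split; apply: eq_bigr => j _ /=.
rewrite tile_densityE ?divr_gt0 // gaussE ?tile_var_gt0 //.
congr (_ * expR _).
set w := 2 * sig2 + N0 / Atil k j.
by rewrite -(opprB (ymap l k j)) sqrrN mulNr -(mulr_natr w 2) invfM mulrA.
Qed.

Lemma likelihood_gt0 l : 0 < likelihood sig2 N0 Atil y ymap l.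
Proof. by rewrite likelihoodE mulr_gt0 ?likelihood_scale_gt0 ?expR_gt0. Qed.

Lemma ler_likelihood l l' :
  (likelihood sig2 N0 Atil y ymap l' <= likelihood sig2 N0 Atil y ymap l) =
  (match_cost sig2 N0 Atil y ymap l <= match_cost sig2 N0 Atil y ymap l').
Proof.
by rewrite !likelihoodE (ler_pM2l likelihood_scale_gt0) ler_expR lerN2 ler_pM2r.
Qed.

Lemma ler_posterior l l' :
  (posterior sig2 N0 Atil y ymap l' <= posterior sig2 N0 Atil y ymap l) =
  (likelihood sig2 N0 Atil y ymap l' <= likelihood sig2 N0 Atil y ymap l).
Proof.
have prior_gt0 : 0 < prior l :> R.
  by rewrite invr_gt0 ltr0n (leq_ltn_trans _ (ltn_ord l)).
have evidence_gt0 : 0 < \sum_(i < L) prior i * likelihood sig2 N0 Atil y ymap i.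
  rewrite (bigD1 l) //= ltr_pwDl ?mulr_gt0 ?likelihood_gt0 ?sumr_ge0 // => i _.
  by rewrite mulr_ge0 ?ltW ?likelihood_gt0.
by rewrite /posterior ler_pM2r ?invr_gt0 // ler_pM2l.
Qed.

End MaximumLikelihood.

Theorem proposition1 (R : realType) (Nw Nd L : nat)
    (hNw : (1 <= Nw)%N) (hNd : (1 <= Nd)%N) (hL : (1 <= L)%N)
    (sig2 N0 : R) (hsig : 0 < sig2) (hN0 : 0 < N0)
    (Atil : 'M[R]_(Nw, Nd)) (hA : forall k j, 0 < Atil k j)
    (y : 'M[R]_(Nw, Nd)) (ymap : 'I_L -> 'M[R]_(Nw, Nd)) (l : 'I_L) :
  (forall l' : 'I_L,
      posterior sig2 N0 Atil y ymap l' <= posterior sig2 N0 Atil y ymap l)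
  <->
  (forall l' : 'I_L,
      match_cost sig2 N0 Atil y ymap l <= match_cost sig2 N0 Atil y ymap l').
Proof.
have posterior_cost l' :
    (posterior sig2 N0 Atil y ymap l' <= posterior sig2 N0 Atil y ymap l) =
    (match_cost sig2 N0 Atil y ymap l <= match_cost sig2 N0 Atil y ymap l').
  by rewrite ler_posterior // ler_likelihood.
by split=> maxl l'; [rewrite -posterior_cost | rewrite posterior_cost].
Qed.
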